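(* For every pair of integers $0\le m\le n$ and every $\sigma\ge0$, the system $(\ast)$ has a unique solution $(L,M,N)$ with $L\in(-\pi/2,0]$, $M,N\in[0,\pi/2)$. Moreover: (1) For $0\le m<n$ and $\sigma>0$, $L,N=O(\sigma/n)$ with an absolute implied constant. (2) Additionally, $M=O(\sigma/m)$ uniformly for $1\le m\le n$, $\sigma>0$; and for $m=0<n$, $M=O(\sqrt\sigma)$ for all sufficiently small $\sigma>0$, with an absolute implied constant. (3) For $m=n=0$, $|L|,|M|,|N|\ll\sqrt\sigma$; in particular $L,M,N$ are continuous at $\sigma=0$.
   Context: Fix $r>0$. For integers $m,n\ge0$ and $\sigma\ge0$, the system $(\ast)$ in the unknowns $L,M,N$ is $$\big(2L-M-N-(m+n)\pi\big)\tan L=3r\sigma,\quad \big(2M-N-L+m\pi\big)\tan M=3r\sigma,\quad \big(2N-L-M+n\pi\big)\tan N=3r\sigma .$$ *)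

From Stdlib Require Import Reals.
Open Scope R_scope.

Definition sys (r : R) (m n : nat) (s L M N : R) : Prop :=
  (2*L - M - N - (INR m + INR n) * PI) * tan L = 3 * r * s /\
  (2*M - N - L + INR m * PI) * tan M = 3 * r * s /\
  (2*N - L - M + INR n * PI) * tan N = 3 * r * s.

Definition in_range (L M N : R) : Prop :=
  - (PI / 2) < L <= 0 /\ 0 <= M < PI / 2 /\ 0 <= N < PI / 2.

(* Substituting y = -L and t = L + M + N turns each equation of ( * ) into the
   scalar equation (3x + k - tau) tan x = 3 r sigma, with tau = -t for y and
   tau = t for M and N.  On (0, pi/2) this equation has exactly one root, which
   is increasing and 1/3-Lipschitz in tau.  Hence t must be a fixed point of
   t |-> M(t) + N(t) - y(t), a map which is strictly 1-Lipschitz: a fixed point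
   exists by the intermediate value theorem and is unique.  The bounds come from
   x <= |tan x| on (-pi/2, pi/2), since each coefficient 3x + k - tau is at least
   n (or m) in cases (1) and (2), and at least |x| itself in the degenerate cases. *)

From Stdlib Require Import Reals Lra Psatz ClassicalEpsilon.
Open Scope R_scope.

Lemma PI_gt_3 : 3 < PI.
Proof. generalize PI2_3_2; lra. Qed.

Lemma id_le_tan x : 0 <= x < PI/2 -> x <= tan x.
Proof.
  intros [x_ge0 x_lt]. destruct (Req_dec x 0) as [->|x_neq0]; [rewrite tan_0; lra|].
  destruct (MVT_cor2 tan (fun c => 1 + tan c ^ 2) 0 x) as [c [Hc _]]; [lra| |].
  - intros c Hc. assert (c_bound : -PI/2 < c < PI/2) by lra.
    apply (derive_pt_eq_1 _ _ _ (derivable_pt_tan c c_bound)). apply derive_pt_tan.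
  - rewrite tan_0 in Hc. assert (0 <= tan c ^ 2) by apply pow2_ge_0. nra.
Qed.

Lemma mul_le_of_tan_eq c d x a :
  0 <= d <= c -> 0 <= x < PI/2 -> c * tan x = a -> d * x <= a.
Proof.
  intros d_bound x_bound <-. apply Rmult_le_compat; try lra. now apply id_le_tan.
Qed.

Lemma abs_le_sqrt_of_sqr_le x B : x * x <= B -> Rabs x <= sqrt B.
Proof. intros. rewrite <- sqrt_Rsqr_abs. apply sqrt_le_1_alt. unfold Rsqr. lra. Qed.

Lemma lipschitz_continuity f K : 0 < K ->
  (forall x y, Rabs (f x - f y) <= K * Rabs (x - y)) -> continuity f.
Proof.
  intros K_pos f_lip x eps eps_pos. exists (eps / K). split; [apply Rdiv_lt_0_compat; lra|].
  intros y [_ Hy]. simpl in *. unfold R_dist in *.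
  eapply Rle_lt_trans; [apply f_lip|].
  replace eps with (K * (eps/K)) by (field; lra). apply Rmult_lt_compat_l; lra.
Qed.

Lemma PI3_lt_atan_2 : PI/3 < atan 2.
Proof.
  assert (sqrt3_lt_2 : sqrt 3 < 2).
  { rewrite <- (sqrt_square 2) by lra. apply sqrt_lt_1_alt. lra. }
  rewrite <- tan_PI3 in sqrt3_lt_2. apply atan_increasing in sqrt3_lt_2.
  rewrite atan_tan in sqrt3_lt_2; [lra|]. generalize PI_gt_3; lra.
Qed.

(* Roots are only guaranteed for parameters in [-pi/2, pi]; clamping makes the
   fixed-point map below globally Lipschitz, as Stdlib's [IVT] requires. *)
Definition clamp (t : R) : R := Rmax (-(PI/2)) (Rmin t PI).

Lemma clamp_lipschitz t t' : Rabs (clamp t - clamp t') <= Rabs (t - t').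
Proof. unfold clamp, Rmax, Rmin. repeat destruct Rle_dec; split_Rabs; lra. Qed.

Lemma clamp_bound t : -(PI/2) <= clamp t <= PI.
Proof. generalize PI_gt_3. unfold clamp, Rmax, Rmin. repeat destruct Rle_dec; lra. Qed.

Lemma clamp_id t : -(PI/2) <= t <= PI -> clamp t = t.
Proof. unfold clamp, Rmax, Rmin. intros. repeat destruct Rle_dec; lra. Qed.

Definition tan_eqn (a k t x : R) : Prop := (3*x + k - t) * tan x = a.

Section TanEquation.

Variables a k : R.
Hypothesis a_pos : 0 < a.

Lemma tan_eqn_pos t x : 0 <= x -> tan_eqn a k t x -> 0 < x.
Proof.
  unfold tan_eqn. intros x_ge0 Hx. destruct (Req_dec x 0) as [->|]; [|lra].
  rewrite tan_0 in Hx. lra.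
Qed.

(* Substituting x = atan z, the left side becomes continuous in z, negative at
   z = 0 and positive for z large, because 3 atan 2 > pi >= t - k. *)
Lemma tan_eqn_solvable t : t - k <= PI -> exists x, 0 < x < PI/2 /\ tan_eqn a k t x.
Proof.
  intros t_le. set (g z := (3 * atan z + k - t) * z - a).
  assert (g_cont : continuity g).
  { apply continuity_minus; [apply continuity_mult|apply continuity_const; now intros ??].
    - apply continuity_minus; [apply continuity_plus|apply continuity_const; now intros ??].
      + apply continuity_scal, derivable_continuous. intro; apply derivable_pt_atan.
      + apply continuity_const; now intros ??.
    - apply derivable_continuous, derivable_id. }
  set (c0 := 3 * atan 2 - PI).
  assert (c0_pos : 0 < c0) by (unfold c0; generalize PI3_lt_atan_2; lra).
  set (Z := 2 + a / c0).
  assert (Z_ge2 : 2 <= Z) by (unfold Z; generalize (Rdiv_lt_0_compat a c0 a_pos c0_pos); lra).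
  assert (atan_Z : atan 2 <= atan Z).
  { destruct (Req_dec Z 2) as [->|]; [lra|]. left; apply atan_increasing; lra. }
  assert (gZ_pos : 0 < g Z).
  { unfold g. assert (c0 * Z <= (3 * atan Z + k - t) * Z)
      by (apply Rmult_le_compat_r; [lra|unfold c0; lra]).
    assert (c0 * Z = 2 * c0 + a) by (unfold Z; field; lra). lra. }
  destruct (IVT g 0 Z g_cont ltac:(lra) ltac:(unfold g; lra) gZ_pos) as [z [Hz gz]].
  assert (z_pos : 0 < z) by (destruct (Req_dec z 0); [subst; unfold g in gz|]; lra).
  exists (atan z). unfold tan_eqn. rewrite tan_atan. split; [|unfold g in gz; lra].
  split; [|generalize (atan_bound z); lra].
  rewrite <- atan_0. now apply atan_increasing.
Qed.

Section TwoRoots.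

Variables t t' x x' : R.
Hypotheses (x_bound : 0 < x < PI/2) (x'_bound : 0 < x' < PI/2).
Hypotheses (Hx : tan_eqn a k t x) (Hx' : tan_eqn a k t' x').

Lemma tan_eqn_coef_pos : 0 < 3*x + k - t /\ 0 < 3*x' + k - t'.
Proof.
  unfold tan_eqn in *. generalize (tan_gt_0 x), (tan_gt_0 x'). split; nra.
Qed.

(* Both factors of the product would move in the same direction. *)
Lemma tan_eqn_root_le : t <= t' -> x <= x'.
Proof.
  intros t_le. destruct (Rle_or_lt x x') as [|x'_lt]; [assumption|exfalso].
  destruct tan_eqn_coef_pos.
  assert (tan x' < tan x) by (apply tan_increasing; lra).
  assert (0 < tan x') by (apply tan_gt_0; lra).
  unfold tan_eqn in *. nra.
Qed.

Lemma tan_eqn_root_lt : t < t' -> 3 * (x' - x) < t' - t.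
Proof.
  intros t_lt. destruct (Rlt_or_le (3 * (x' - x)) (t' - t)) as [|Hge]; [assumption|exfalso].
  destruct tan_eqn_coef_pos.
  assert (tan x < tan x') by (apply tan_increasing; lra).
  assert (0 < tan x) by (apply tan_gt_0; lra).
  unfold tan_eqn in *. nra.
Qed.

End TwoRoots.

Lemma tan_eqn_root_unique t x x' : 0 < x < PI/2 -> 0 < x' < PI/2 ->
  tan_eqn a k t x -> tan_eqn a k t x' -> x = x'.
Proof.
  intros. apply Rle_antisym; apply (tan_eqn_root_le t t); auto; lra.
Qed.

Definition tan_root t : R :=
  epsilon (inhabits 0) (fun x => 0 < x < PI/2 /\ tan_eqn a k t x).

Lemma tan_root_spec t : t - k <= PI -> 0 < tan_root t < PI/2 /\ tan_eqn a k t (tan_root t).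
Proof. intros. unfold tan_root. apply epsilon_spec, tan_eqn_solvable. assumption. Qed.

Lemma tan_root_lipschitz t t' : t - k <= PI -> t' - k <= PI ->
  Rabs (tan_root t - tan_root t') <= /3 * Rabs (t - t').
Proof.
  intros Ht Ht'. destruct (tan_root_spec t Ht) as [B E], (tan_root_spec t' Ht') as [B' E'].
  destruct (Rtotal_order t t') as [lt|[<-|gt]].
  - generalize (tan_eqn_root_le _ _ _ _ B B' E E' ltac:(lra)),
      (tan_eqn_root_lt _ _ _ _ B B' E E' lt). split_Rabs; lra.
  - split_Rabs; lra.
  - generalize (tan_eqn_root_le _ _ _ _ B' B E' E ltac:(lra)),
      (tan_eqn_root_lt _ _ _ _ B' B E' E gt). split_Rabs; lra.
Qed.

End TanEquation.

Definition reduced_sys (a km kn y M N : R) : Prop :=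
  tan_eqn a (km + kn) (-(M + N - y)) y /\ tan_eqn a km (M + N - y) M /\
  tan_eqn a kn (M + N - y) N.

Lemma sys_reduced_sys r m n s L M N :
  sys r m n s L M N <-> reduced_sys (3*r*s) (INR m * PI) (INR n * PI) (-L) M N.
Proof.
  unfold sys, reduced_sys, tan_eqn. rewrite tan_neg.
  replace ((3 * - L + (INR m * PI + INR n * PI) - - (M + N - - L)) * - tan L)
    with ((2*L - M - N - (INR m + INR n) * PI) * tan L) by ring.
  replace (3 * M + INR m * PI - (M + N - - L)) with (2*M - N - L + INR m * PI) by ring.
  replace (3 * N + INR n * PI - (M + N - - L)) with (2*N - L - M + INR n * PI) by ring.
  tauto.
Qed.

Section ReducedSystem.

Variables a km kn : R.
Hypotheses (a_pos : 0 < a) (km_ge0 : 0 <= km) (kn_ge0 : 0 <= kn).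

Lemma reduced_sys_exists : exists y M N,
  0 < y < PI/2 /\ 0 < M < PI/2 /\ 0 < N < PI/2 /\ reduced_sys a km kn y M N.
Proof.
  generalize PI_gt_3; intro.
  set (yt t := tan_root a (km + kn) (- t)).
  set (Mt t := tan_root a km t). set (Nt t := tan_root a kn t).
  assert (roots : forall t, -(PI/2) <= t <= PI ->
    (0 < yt t < PI/2 /\ tan_eqn a (km + kn) (-t) (yt t)) /\
    (0 < Mt t < PI/2 /\ tan_eqn a km t (Mt t)) /\
    (0 < Nt t < PI/2 /\ tan_eqn a kn t (Nt t))).
  { intros. repeat split; apply tan_root_spec; lra. }
  set (phi t := Mt (clamp t) + Nt (clamp t) - yt (clamp t) - clamp t).
  assert (phi_cont : continuity phi).
  { apply (lipschitz_continuity _ 2); [lra|]. intros t t'. unfold phi, yt, Mt, Nt.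
    generalize (clamp_lipschitz t t'), (clamp_bound t), (clamp_bound t'). intros ???.
    generalize (tan_root_lipschitz a (km + kn) a_pos (- clamp t) (- clamp t')
      ltac:(lra) ltac:(lra)).
    generalize (tan_root_lipschitz a km a_pos (clamp t) (clamp t') ltac:(lra) ltac:(lra)).
    generalize (tan_root_lipschitz a kn a_pos (clamp t) (clamp t') ltac:(lra) ltac:(lra)).
    split_Rabs; lra. }
  assert (phi_lo : 0 < phi (-(PI/2))).
  { unfold phi. rewrite clamp_id by lra. generalize (roots (-(PI/2)) ltac:(lra)). lra. }
  assert (phi_hi : phi PI < 0).
  { unfold phi. rewrite clamp_id by lra. generalize (roots PI ltac:(lra)). lra. }
  destruct (IVT (fun t => - phi t) (-(PI/2)) PI ltac:(now apply continuity_opp)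
    ltac:(lra) ltac:(lra) ltac:(lra)) as [t [Ht phi_t]].
  unfold phi in phi_t. rewrite clamp_id in phi_t by lra.
  destruct (roots t Ht) as [[By Ey] [[BM EM] [BN EN]]].
  exists (yt t), (Mt t), (Nt t). unfold reduced_sys.
  replace (Mt t + Nt t - yt t) with t by lra. tauto.
Qed.

(* The parameters t < t' of two solutions would satisfy t' - t < t' - t. *)
Lemma reduced_sys_param_le y M N y' M' N' :
  0 < y < PI/2 -> 0 < M < PI/2 -> 0 < N < PI/2 -> reduced_sys a km kn y M N ->
  0 < y' < PI/2 -> 0 < M' < PI/2 -> 0 < N' < PI/2 -> reduced_sys a km kn y' M' N' ->
  M + N - y <= M' + N' - y'.
Proof.
  intros By BM BN [Ey [EM EN]] By' BM' BN' [Ey' [EM' EN']].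
  apply Rnot_lt_le. intro lt.
  generalize (tan_eqn_root_lt _ _ a_pos _ _ _ _ BM' BM EM' EM lt),
    (tan_eqn_root_lt _ _ a_pos _ _ _ _ BN' BN EN' EN lt),
    (tan_eqn_root_lt _ _ a_pos _ _ _ _ By By' Ey Ey' ltac:(lra)).
  lra.
Qed.

Lemma reduced_sys_unique y M N y' M' N' :
  0 < y < PI/2 -> 0 < M < PI/2 -> 0 < N < PI/2 -> reduced_sys a km kn y M N ->
  0 < y' < PI/2 -> 0 < M' < PI/2 -> 0 < N' < PI/2 -> reduced_sys a km kn y' M' N' ->
  y = y' /\ M = M' /\ N = N'.
Proof.
  intros By BM BN S By' BM' BN' S'.
  assert (t_eq : M + N - y = M' + N' - y').
  { apply Rle_antisym; eapply reduced_sys_param_le; eassumption. }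
  destruct S as [Ey [EM EN]], S' as [Ey' [EM' EN']].
  rewrite <- t_eq in Ey', EM', EN'.
  repeat split; eapply tan_eqn_root_unique; eassumption.
Qed.

End ReducedSystem.

Lemma sys_zero_unique r m n L M N :
  in_range L M N -> sys r m n 0 L M N -> L = 0 /\ M = 0 /\ N = 0.
Proof.
  intros [BL [BM BN]] [EL [EM EN]]. rewrite Rmult_0_r in EL, EM, EN.
  generalize PI_gt_3, (pos_INR m), (pos_INR n). intros.
  assert (0 <= INR m * PI) by nra. assert (0 <= INR n * PI) by nra.
  assert (L_eq : L = 0).
  { destruct (Req_dec L 0) as [|L_neq]; [assumption|exfalso].
    assert (tan L < 0) by (apply tan_lt_0; lra).
    apply Rmult_integral in EL. nra. }
  subst L.
  assert (2*M - N + INR m * PI = 0 \/ M = 0) as [|].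
  { apply Rmult_integral in EM. destruct EM as [|tanM]; [left; lra|right].
    destruct (Req_dec M 0); [assumption|]. generalize (tan_gt_0 M); lra. }
  all: assert (2*N - M + INR n * PI = 0 \/ N = 0) as [|] by
    (apply Rmult_integral in EN; destruct EN as [|tanN]; [left; lra|right];
     destruct (Req_dec N 0); [assumption|]; generalize (tan_gt_0 N); lra).
  all: repeat split; lra.
Qed.

Lemma sys_exists_unique r m n s : 0 < r -> 0 <= s ->
  exists L M N, in_range L M N /\ sys r m n s L M N /\
    forall L' M' N', in_range L' M' N' -> sys r m n s L' M' N' ->
      L' = L /\ M' = M /\ N' = N.
Proof.
  intros r_pos s_ge0. generalize PI_gt_3, (pos_INR m), (pos_INR n). intros.
  destruct (Req_dec s 0) as [->|s_neq0].
  { exists 0, 0, 0. split; [unfold in_range; lra|].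
    split; [unfold sys; rewrite tan_0; repeat split; ring|]. apply sys_zero_unique. }
  assert (a_pos : 0 < 3*r*s) by nra.
  destruct (reduced_sys_exists (3*r*s) (INR m * PI) (INR n * PI) a_pos ltac:(nra) ltac:(nra))
    as [y [M [N [By [BM [BN S]]]]]].
  exists (-y), M, N. split; [unfold in_range; lra|].
  split; [rewrite sys_reduced_sys, Ropp_involutive; assumption|].
  intros L' M' N' [BL' [BM' BN']] S'. rewrite sys_reduced_sys in S'.
  pose proof S' as [Ey' [EM' EN']].
  generalize (tan_eqn_pos _ _ a_pos _ (-L') ltac:(lra) Ey'),
    (tan_eqn_pos _ _ a_pos _ _ (proj1 BM') EM'),
    (tan_eqn_pos _ _ a_pos _ _ (proj1 BN') EN'). intros.
  destruct (reduced_sys_unique _ _ _ a_pos (-L') M' N' y M N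
    ltac:(lra) ltac:(lra) ltac:(lra) S' By BM BN S) as [? [? ?]].
  repeat split; lra.
Qed.

Section Bounds.

Variables (r : R) (m n : nat) (s L M N : R).
Hypotheses (range : in_range L M N) (solution : sys r m n s L M N).

Lemma sys_L_bound : INR n * (- L) <= 3*r*s.
Proof.
  destruct range as [BL [BM BN]], solution as [EL _].
  apply (mul_le_of_tan_eq (2*(-L) + M + N + (INR m + INR n) * PI)); [|lra|].
  - generalize PI_gt_3, (pos_INR m), (pos_INR n). intros. nra.
  - rewrite tan_neg, <- EL. ring.
Qed.

Lemma sys_N_bound : (1 <= n)%nat -> INR n * N <= 3*r*s.
Proof.
  intros n_ge1. destruct range as [? [? ?]], solution as [_ [_ EN]].
  apply (mul_le_of_tan_eq (2*N - L - M + INR n * PI)); [|lra|assumption].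
  generalize PI_gt_3, (le_INR 1 n n_ge1). simpl. intros. nra.
Qed.

Lemma sys_M_bound : (1 <= m)%nat -> INR m * M <= 3*r*s.
Proof.
  intros m_ge1. destruct range as [? [? ?]], solution as [_ [EM _]].
  apply (mul_le_of_tan_eq (2*M - N - L + INR m * PI)); [|lra|assumption].
  generalize PI_gt_3, (le_INR 1 m m_ge1). simpl. intros. nra.
Qed.

(* With m = 0 the coefficient of tan M is only at least M, and only when N <= M. *)
Lemma sys_M_sqr_bound : m = 0%nat -> N <= M -> M * M <= 3*r*s.
Proof.
  intros -> N_le. destruct range as [? [? ?]], solution as [_ [EM _]].
  apply (mul_le_of_tan_eq (2*M - N - L + INR 0 * PI)); [simpl; lra|lra|assumption].
Qed.

Lemma sys_N_sqr_bound : n = 0%nat -> M <= N -> N * N <= 3*r*s.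
Proof.
  intros -> M_le. destruct range as [? [? ?]], solution as [_ [_ EN]].
  apply (mul_le_of_tan_eq (2*N - L - M + INR 0 * PI)); [simpl; lra|lra|assumption].
Qed.

Lemma sys_L_sqr_bound : (-L) * (-L) <= 3*r*s.
Proof.
  destruct range as [BL [BM BN]], solution as [EL _].
  apply (mul_le_of_tan_eq (2*(-L) + M + N + (INR m + INR n) * PI)); [|lra|].
  - generalize PI_gt_3, (pos_INR m), (pos_INR n). intros. nra.
  - rewrite tan_neg, <- EL. ring.
Qed.

End Bounds.

Lemma le_mul_div c d x : 0 < d -> d * x <= c -> x <= c / d.
Proof. intros. apply Rmult_le_reg_l with d; [lra|]. field_simplify; lra. Qed.

Lemma abs_le_sqrt_mul r s x : 0 < r -> 0 <= s -> x * x <= 3*r*s ->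
  Rabs x <= sqrt (3*r) * sqrt s.
Proof. intros. rewrite <- sqrt_mult by lra. now apply abs_le_sqrt_of_sqr_le. Qed.

Lemma le_sqrt_of_le_1 s : 0 <= s <= 1 -> s <= sqrt s.
Proof.
  intros. assert (sqrt s <= 1) by (rewrite <- sqrt_1; now apply sqrt_le_1_alt).
  generalize (sqrt_sqrt s ltac:(lra)), (sqrt_pos s). nra.
Qed.

Lemma sys_abs_le_div r m n s L M N : 0 < r -> 0 < s -> (1 <= n)%nat ->
  in_range L M N -> sys r m n s L M N ->
  Rabs L <= 3*r * (s / INR n) /\ Rabs N <= 3*r * (s / INR n).
Proof.
  intros r_pos s_pos n_ge1 range solution.
  assert (n_pos : 0 < INR n) by (apply lt_0_INR; lia).
  destruct range as [BL [BM BN]]. rewrite Rmult_div_assoc, Rabs_left1, Rabs_pos_eq by lra.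
  split; apply le_mul_div; trivial.
  - now apply (sys_L_bound r m n s L M N).
  - now apply (sys_N_bound r m n s L M N).
Qed.

Lemma sys_M_le_div r m n s L M N : 0 < r -> 0 < s -> (1 <= m)%nat ->
  in_range L M N -> sys r m n s L M N -> Rabs M <= 3*r * (s / INR m).
Proof.
  intros r_pos s_pos m_ge1 range solution.
  assert (m_pos : 0 < INR m) by (apply lt_0_INR; lia).
  pose proof range as [BL [BM BN]]. rewrite Rmult_div_assoc, Rabs_pos_eq by lra.
  apply le_mul_div; trivial. now apply (sys_M_bound r m n s L M N).
Qed.

(* If M <= N, then M is controlled by the linear bound on N. *)
Lemma sys_M_le_sqrt r n s L M N : 0 < r -> 0 < s <= 1 -> (1 <= n)%nat ->
  in_range L M N -> sys r 0 n s L M N -> Rabs M <= (3*r + sqrt (3*r)) * sqrt s.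
Proof.
  intros r_pos s_bound n_ge1 range solution.
  generalize (sqrt_pos s), (sqrt_pos (3*r)), (le_sqrt_of_le_1 s ltac:(lra)). intros.
  pose proof range as [BL [BM BN]].
  rewrite Rabs_pos_eq by lra. destruct (Rle_or_lt N M) as [N_le|M_lt].
  - generalize (abs_le_sqrt_mul r s M r_pos ltac:(lra)
      (sys_M_sqr_bound r 0 n s L M N range solution eq_refl N_le)).
    rewrite Rabs_pos_eq by lra. nra.
  - generalize (sys_N_bound r 0 n s L M N range solution n_ge1), (le_INR 1 n n_ge1).
    simpl. nra.
Qed.

Lemma sys_00_le_sqrt r s L M N : 0 < r -> 0 <= s ->
  in_range L M N -> sys r 0 0 s L M N ->
  Rabs L <= sqrt (3*r) * sqrt s /\ Rabs M <= sqrt (3*r) * sqrt s /\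
  Rabs N <= sqrt (3*r) * sqrt s.
Proof.
  intros r_pos s_ge0 range solution.
  pose proof range as [BL [BM BN]].
  generalize (sys_L_sqr_bound r 0 0 s L M N range solution). intro.
  assert (M_sqr : M * M <= 3*r*s /\ N * N <= 3*r*s).
  { destruct (Rle_or_lt N M) as [N_le|M_lt].
    - generalize (sys_M_sqr_bound r 0 0 s L M N range solution eq_refl N_le). nra.
    - generalize (sys_N_sqr_bound r 0 0 s L M N range solution eq_refl ltac:(lra)). nra. }
  split; [|split]; apply abs_le_sqrt_mul; trivial; nra.
Qed.

Theorem lemma8p1 (r : R) (hr : 0 < r) :
  (forall (m n : nat) (s : R), (m <= n)%nat -> 0 <= s ->
     exists L M N, in_range L M N /\ sys r m n s L M N /\
       forall L' M' N', in_range L' M' N' -> sys r m n s L' M' N' ->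
         L' = L /\ M' = M /\ N' = N) /\
  (exists C : R, forall (m n : nat) (s L M N : R), (m < n)%nat -> 0 < s ->
     in_range L M N -> sys r m n s L M N ->
     Rabs L <= C * (s / INR n) /\ Rabs N <= C * (s / INR n)) /\
  (exists C : R, forall (m n : nat) (s L M N : R), (1 <= m)%nat -> (m <= n)%nat ->
     0 < s -> in_range L M N -> sys r m n s L M N ->
     Rabs M <= C * (s / INR m)) /\
  (exists C delta : R, 0 < delta /\ forall (n : nat) (s L M N : R), (0 < n)%nat ->
     0 < s < delta -> in_range L M N -> sys r 0 n s L M N ->
     Rabs M <= C * sqrt s) /\
  (exists C : R, forall (s L M N : R), 0 <= s ->
     in_range L M N -> sys r 0 0 s L M N ->
     Rabs L <= C * sqrt s /\ Rabs M <= C * sqrt s /\ Rabs N <= C * sqrt s).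
Proof.
  split; [|split; [|split; [|split]]].
  - intros m n s _. now apply sys_exists_unique.
  - exists (3*r). intros m n s L M N m_lt s_pos.
    apply sys_abs_le_div; trivial. lia.
  - exists (3*r). intros m n s L M N m_ge1 _ s_pos. now apply sys_M_le_div.
  - exists (3*r + sqrt (3*r)), 1. split; [lra|].
    intros n s L M N n_pos s_bound. apply sys_M_le_sqrt; trivial; lra.
  - exists (sqrt (3*r)). intros s L M N s_ge0. now apply sys_00_le_sqrt.
Qed.
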